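(* Let $X$, $(S_n)$ be as in the context and assume there exists a quasi-stationary distribution $\nu$ with exponential absorption parameter $\theta_{0,S}$. Then $j_S(\nu)=0$ and $\nu\{x:\ j_S(x)>0\}=0$. If in addition Assumption (A) holds and $\nu\in \mathcal M_+(W_S)$, then $\nu(\eta_S)=1$ and $\nu=\sum_{i\in I_S}\nu(\eta_{S,i})\,\nu_{S,i}$.
   Context: Let $D$ be a measurable space, $\partial\notin D$, and $(X_n)_{n\in\mathbb Z_+}$ a Markov chain on $D\cup\{\partial\}$ for which $\partial$ is absorbing; $\tau_\partial=\inf\{n\ge0: X_n=\partial\}$; $\mathbb P_x,\mathbb E_x$ denote law and expectation given $X_0=x$, $\mathbb P_\mu=\int\mathbb P_x\mu(dx)$. Semigroup $S_nf(x)=\mathbb E_x(f(X_n)\mathbbm 1_{n<\tau_\partial})$, $\mu S_nf=\int S_nf\,d\mu$. Functions are extended by $0$ outside their domain. For measurable $W:D\to[1,\infty)$, $\mathcal M(W)$: finite signed measures with $|\mu|(W)<\infty$, norm $|\mu|(W)$; $\mathcal M_+(W)$ its nonnegative part; $L^\infty(W)$: measurable $f$ with $\|f\|_W=\sup|f|/W<\infty$. $\theta_S(\mu):=\inf\{\theta\ge0:\liminf_n\theta^{-n}\mu S_n\mathbbm 1_D=0\}$, $\theta_S(x)=\theta_S(\delta_x)$, $\theta_{0,S}=\sup_x\theta_S(x)$; $j_S(\mu):=\inf\{\ell\ge0:\liminf_n n^{-\ell}\theta_{0,S}^{-n}\mu S_n\mathbbm 1_D=0\}$ (with $\inf\emptyset=0$),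 $j_S(x)=j_S(\delta_x)$. A quasi-stationary distribution (QSD) is a probability measure $\nu$ on $D$ with $\mathbb P_\nu(X_n\in\cdot\mid n<\tau_\partial)=\nu$ for all $n$; its exponential absorption parameter is the $\theta\in(0,1]$ with $\mathbb P_\nu(n<\tau_\partial)=\theta^n$ for all $n$. Assumption (A): $\theta_{0,S}\in(0,1]$, $j_S$ integer valued, and there exist measurable $W_S:D\to[1,\infty)$, a finite or countable set $I_S$, probability measures $\nu_{S,i}\in\mathcal M(W_S)$, non-identically zero nonnegative $\eta_{S,i}\in L^\infty(W_S)$ ($i\in I_S$) with $\sum_i\eta_{S,i}\nu_{S,i}(W_S)\in L^\infty(W_S)$, and $\alpha_{S,n}\to0$, such that for all $f\in L^\infty(W_S)$, $n\ge1$, $x\in D$: $\big|\theta_{0,S}^{-n}n^{-j_S(x)}\mathbb E_x(f(X_n)\mathbbm 1_{n<\tau_\partial})-\sum_i\eta_{S,i}(x)\nu_{S,i}(f)\big|\le\alpha_{S,n}W_S(x)\|f\|_{W_S}$. Then $\eta_S:=\sum_i\eta_{S,i}$. *)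

From HB Require Import structures.
From mathcomp Require Import all_boot all_order all_algebra.
From mathcomp Require Import all_classical all_reals all_analysis.
Import Order.TTheory GRing.Theory Num.Theory.
Import numFieldNormedType.Exports.

Set Implicit Arguments.
Unset Strict Implicit.
Unset Printing Implicit Defensive.

Local Open Scope classical_set_scope.
Local Open Scope ring_scope.
Local Open Scope ereal_scope.

(* The state space of the chain is T = D u {cem}: the Markov chain is given
   by its (time-homogeneous) transition probability kernel P on T, and the
   cemetery point cem is absorbing. *)
Section chain.
Context (R : realType) (d : measure_display) (T : measurableType d).
Variables (P : R.-pker T ~> T) (cem : T).

Definition Dom : set T := [set x | x <> cem].

(* Spos n g x = E_x ( g(X_n) 1_{n < tau_cem} ) for g >= 0
   (n-step iteration of the transition kernel; functions are extended by 0
   at the cemetery). *)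
Fixpoint Spos (n : nat) (g : T -> \bar R) (x : T) : \bar R :=
  match n with
  | 0 => if x == cem then 0 else g x
  | m.+1 => \int[P x]_y Spos m g y
  end.

Definition Ssg (n : nat) (f : T -> R) (x : T) : \bar R :=
  Spos n (fun y => (Num.max (f y) 0%R)%:E) x
  - Spos n (fun y => (Num.max (- f y)%R 0%R)%:E) x.

Definition S1 (n : nat) (x : T) : \bar R := Spos n (fun _ => 1) x.

Definition muS1 (mu : {measure set T -> \bar R}) (n : nat) : \bar R :=
  \int[mu]_(x in Dom) S1 n x.

(* theta^{-n} * a, with the conventions 0^{-n} = +oo (n >= 1), 0 * oo = 0 *)
Definition negpow (th : R) (n : nat) (a : \bar R) : \bar R :=
  if (th ^+ n == 0)%R then (if a == 0 then 0 else +oo)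
  else a * ((th ^- n)%R)%:E.

Definition theta_seq (a : nat -> \bar R) : \bar R :=
  ereal_inf [set th%:E | th in
    [set th : R | (0 <= th)%R /\ limn_einf (fun n => negpow th n (a n)) = 0]].

Definition thetaS_mu (mu : {measure set T -> \bar R}) : \bar R :=
  theta_seq (muS1 mu).
(* theta_S(x) = theta_S(delta_x); delta_x S_n 1_D = S_n 1_D (x) *)
Definition thetaS_pt (x : T) : \bar R := theta_seq (fun n => S1 n x).
Definition theta0S : \bar R := ereal_sup (thetaS_pt @` Dom).

Definition j_seq (a : nat -> \bar R) : \bar R :=
  let th0 := fine theta0S in
  let L := [set l : R | (0 <= l)%R /\
     limn_einf (fun n => (n%:R `^ (- l))%:E * negpow th0 n (a n)) = 0] in
  if `[< L !=set0 >] then ereal_inf (EFin @` L) else 0.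

Definition jS_mu (mu : {measure set T -> \bar R}) : \bar R := j_seq (muS1 mu).
Definition jS_pt (x : T) : \bar R := j_seq (fun n => S1 n x).

(* quasi-stationary distribution: a probability measure on D with
   P_nu(n < tau) > 0 and P_nu(X_n in A | n < tau) = nu(A) *)
Definition isQSD (nu : probability T R) : Prop :=
  nu [set cem] = 0 /\
  forall (n : nat) (A : set T), measurable A -> A `<=` Dom ->
    0 < muS1 nu n /\
    \int[nu]_(x in Dom) Spos n (fun y => (\1_A y)%:E) x = nu A * muS1 nu n.

Definition exp_param (nu : probability T R) (th : R) : Prop :=
  (0 < th <= 1)%R /\ forall n : nat, muS1 nu n = (th ^+ n)%:E.

Definition inLinf (W f : T -> R) : Prop :=
  exists C : R, forall x, Dom x -> (`|f x| <= C * W x)%R.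

Definition normW (W f : T -> R) : \bar R :=
  ereal_sup [set (`|f x| / W x)%:E | x in Dom].

Definition sumI (I : countType) (a : I -> \bar R) : \bar R :=
  \esum_(i in [set: I]) maxe (a i) 0 - \esum_(i in [set: I]) maxe (- a i) 0.

Definition etaS (I : countType) (eta : I -> T -> R) (x : T) : \bar R :=
  \esum_(i in [set: I]) (eta i x)%:E.

Definition AssumptionA (W : T -> R) (I : countType)
    (nuS : I -> probability T R) (eta : I -> T -> R) (alpha : nat -> R) : Prop :=
  (0 < theta0S <= 1) /\
  (forall x, Dom x -> exists k : nat, jS_pt x = (k%:R)%:E) /\
  (measurable_fun Dom W /\ (forall x, Dom x -> (1 <= W x)%R)) /\
  (forall i, nuS i [set cem] = 0 /\ \int[nuS i]_(y in Dom) (W y)%:E < +oo) /\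
  (forall i, [/\ measurable_fun Dom (eta i),
                 (forall x, Dom x -> (0 <= eta i x)%R),
                 (exists x, Dom x /\ eta i x <> 0%R) &
                 inLinf W (eta i)]) /\
  (exists C : R, forall x, Dom x ->
      \esum_(i in [set: I]) ((eta i x)%:E * \int[nuS i]_(y in Dom) (W y)%:E)
      <= (C * W x)%:E) /\
  (alpha @ \oo --> 0%R) /\
  (forall f : T -> R, measurable_fun Dom f -> inLinf W f ->
    forall (n : nat) (x : T), (0 < n)%N -> Dom x ->
    `| ((fine theta0S ^- n) * (n%:R `^ (- fine (jS_pt x))))%:E * Ssg n f x
       - sumI (fun i => (eta i x)%:E * \int[nuS i]_(y in Dom) (f y)%:E) |
    <= (alpha n * W x)%:E * normW W f).

End chain.

(* For nu-a.e. x, j_S(x) = 0: since P_nu(n < tau) = theta_0^n, Fatou's lemma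
   gives, for every l > 0,
     \int liminf_n n^-l theta_0^-n S_n 1_D(x) nu(dx) <= liminf_n n^-l = 0,
   so for nu-a.e. x every l = 1/(k+1) is admissible in the infimum defining
   j_S(x).
   At such x, Assumption (A) with f = 1_A says that theta_0^-n S_n 1_A(x) is
   within alpha_n W(x) of sum_i eta_i(x) nu_i(A). Integrating against nu and
   using quasi-stationarity, \int S_n 1_A dnu = theta_0^n nu(A), yields
     | nu(A) - sum_i nu(eta_i) nu_i(A) | <= |alpha_n| nu(W) --> 0.
   Taking A = D gives nu(eta_S) = 1. *)

From HB Require Import structures.
From mathcomp Require Import all_boot all_order all_algebra.
From mathcomp Require Import all_classical all_reals all_analysis.
From mathcomp Require Import measurable_realfun lra.
Import Order.TTheory GRing.Theory Num.Theory.
Import numFieldNormedType.Exports.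
Set Implicit Arguments.
Unset Strict Implicit.
Unset Printing Implicit Defensive.
Local Open Scope classical_set_scope.
Local Open Scope ring_scope.
Local Open Scope ereal_scope.

Section natpowRN.
Context (R : realType).

Lemma cvg_natpowRN (l : R) : (0 < l)%R ->
  (fun n : nat => (n%:R `^ (- l))%R) @ \oo --> 0%R.
Proof.
move=> l0; apply/cvgr0Pnorm_lt => e e0.
have e0' : (0 < e^-1)%R by rewrite invr_gt0.
near=> n.
have n0 : (0 < n%:R :> R)%R.
  by apply: lt_trans (powR_gt0 _ e0') _; near: n; exact: nbhs_infty_gtr.
rewrite ger0_norm ?powR_ge0 // powRN -[ltRHS](invrK e).
rewrite ltf_pV2 ?posrE ?powR_gt0 //.
have -> : (e^-1 = (e^-1 `^ l^-1) `^ l)%R.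
  by rewrite -powRrM mulVf ?gt_eqF // powRr1 // ltW.
apply: gt0_ltr_powR => //; rewrite ?nnegrE ?powR_ge0 ?ltW //.
near: n; exact: nbhs_infty_gtr.
Unshelve. all: by end_near. Qed.

Lemma limn_einf_natpowRN (l : R) : (0 < l)%R ->
  limn_einf (fun n : nat => (n%:R `^ (- l))%:E) = 0.
Proof.
move=> l0; apply: (cvg_limn_einf_sup _).1.
by apply: cvg_EFin; [exact: nearW | exact: cvg_natpowRN].
Qed.

Lemma exists_natSinv_lt (x : \bar R) : 0 < x -> exists k : nat, (k.+1%:R^-1)%:E < x.
Proof.
case: x => [r||] // x0; last by exists 0%N; rewrite ltry.
rewrite lte_fin in x0; have := near_infty_natSinv_lt (PosNum x0); case=> N _ HN.
by exists N; rewrite lte_fin; apply: (HN N) => /=.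
Qed.

End natpowRN.

Lemma measurable_fun_limn_einf (R : realType) (d : measure_display)
    (T : measurableType d) (D : set T) (f : (T -> \bar R)^nat) :
  (forall n, measurable_fun D (f n)) ->
  measurable_fun D (fun x => limn_einf (f ^~ x)).
Proof.
move=> mf; rewrite (_ : (fun x => _) = fun x => - limn_esup (fun n => - f n x)).
  apply: measurableT_comp => //; apply: measurable_fun_limn_esup => n.
  exact: measurableT_comp.
apply/funext => x; have := limn_esupN (f ^~ x); rewrite /comp => ->.
by rewrite oppeK.
Qed.

Section countable_esum.
Context (R : realType).

Lemma esum_pickle (I : countType) (b : I -> \bar R) : (forall i, 0 <= b i) ->
  \esum_(i in [set: I]) b i = \sum_(n <oo) oapp b 0 (@pickle_inv I n).
Proof.
move=> b0; set b' := fun n => oapp b 0 (@pickle_inv I n).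
have b'0 n : 0 <= b' n by rewrite /b'; case: pickle_inv.
have -> : \esum_(i in [set: I]) b i = \esum_(i in [set: I]) b' (pickle i).
  by apply: eq_esum => i _; rewrite /b' pickleK_inv.
rewrite -(esum_image _ pickle); last first.
  by move=> ? ? _ _; exact: (pcan_inj (@pickleK_inv I)).
rewrite (_ : pickle @` _ = [set n | @pickle_inv I n != None]); last first.
  apply/seteqP; split=> n /=; first by case=> i _ <-; rewrite pickleK_inv.
  case E: (pickle_inv n) => [i|] // _; exists i => //.
  by have := @pickle_invK I n; rewrite E.
rewrite -nneseries_esum; last by move=> n _; exact: b'0.
rewrite eseries_mkcond; apply: eq_eseriesr => n _.
by rewrite /b'; case: pickle_inv.
Qed.

Context (d : measure_display) (T : measurableType d) (D : set T) (mD : measurable D).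
Context (I : countType) (h : I -> T -> \bar R).
Hypotheses (mh : forall i, measurable_fun D (h i)) (h0 : forall i x, D x -> 0 <= h i x).

Lemma emeasurable_fun_esum :
  measurable_fun D (fun x => \esum_(i in [set: I]) h i x).
Proof.
have ms : measurable_fun D (fun x => \sum_(n <oo | n \in [set: nat])
    oapp (h^~ x) 0 (@pickle_inv I n)).
  apply: ge0_emeasurable_sum.
  - by move=> n x Dx _; case: pickle_inv => [i|] //=; exact: h0.
  - by move=> n _; case: pickle_inv => [i|] //=; exact: measurable_cst.
apply: eq_measurable_fun ms => x; rewrite inE => Dx.
rewrite esum_pickle; last by move=> i; exact: h0.
by rewrite eseries_mkcond; apply: eq_eseriesr => n _; rewrite in_setT.
Qed.

Lemma ge0_integral_esum (mu : {measure set T -> \bar R}) :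
  \int[mu]_(x in D) (\esum_(i in [set: I]) h i x) =
  \esum_(i in [set: I]) \int[mu]_(x in D) h i x.
Proof.
rewrite esum_pickle; last by move=> i; apply: integral_ge0 => x; exact: h0.
under eq_integral => x Dx.
  rewrite esum_pickle; last by move=> i; apply: h0; rewrite inE in Dx.
  over.
rewrite /= integral_nneseries //.
- by apply: eq_eseriesr => n _; case: pickle_inv => [i|] //=; exact: integral0.
- by move=> n; case: pickle_inv => [i|] //=; exact: measurable_cst.
- by move=> n x Dx; case: pickle_inv => [i|] //=; exact: h0.
Qed.

End countable_esum.

Lemma eq_of_dist_le_cvg0 (R : realType) (x y m : R) (e : nat -> R) :
  e @ \oo --> 0%R -> (forall n, (0 < n)%N -> `|x - y| <= `|e n| * m)%R -> x = y.
Proof.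
move=> e0 dle; apply/eqP; rewrite -subr_eq0 -normr_le0.
have em : (fun n => `|e n| * m)%R @ \oo --> 0%R.
  by rewrite -(mul0r m) -(@normr0 _ R); apply: cvgMl; exact: cvg_norm.
rewrite -(cvg_lim _ em) //; apply: limr_ge; first exact: cvgP em.
by near=> n; apply: dle; near: n; exists 1%N.
Unshelve. all: by end_near. Qed.

Section integral_approximation.
Context (R : realType) (d : measure_display) (T : measurableType d).
Context (mu : {measure set T -> \bar R}) (D : set T) (mD : measurable D).
Context (f : nat -> T -> \bar R) (g : T -> \bar R) (W : T -> R) (e : nat -> R) (c : R).
Hypotheses (e0 : e @ \oo --> 0%R)
  (mf : forall n, measurable_fun D (f n)) (mg : measurable_fun D g)
  (mW : measurable_fun D (fun x => (W x)%:E))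
  (f0 : forall n x, D x -> 0 <= f n x) (g0 : forall x, D x -> 0 <= g x)
  (W0 : forall x, D x -> (0 <= W x)%R)
  (intW : \int[mu]_(x in D) (W x)%:E < +oo)
  (intf : forall n, (0 < n)%N -> \int[mu]_(x in D) f n x = c%:E)
  (fg : forall n x, (0 < n)%N -> D x ->
     g x <= f n x + (`|e n| * W x)%:E /\ f n x <= g x + (`|e n| * W x)%:E).

Let M := \int[mu]_(x in D) (W x)%:E.

Let measurable_error n : measurable_fun D (fun x => (`|e n| * W x)%:E).
Proof. by under eq_fun do rewrite EFinM; exact: measurable_funeM. Qed.

Let integral_errorD (u : T -> \bar R) n : measurable_fun D u ->
  (forall x, D x -> 0 <= u x) ->
  \int[mu]_(x in D) (u x + (`|e n| * W x)%:E) =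
  \int[mu]_(x in D) u x + (`|e n|)%:E * M.
Proof.
move=> mu_ u0; rewrite ge0_integralD //; last first.
  by move=> x Dx; rewrite lee_fin mulr_ge0 // W0.
congr (_ + _); under eq_integral do rewrite EFinM.
by rewrite ge0_integralZl_EFin // => x Dx; rewrite lee_fin W0.
Qed.

Lemma integral_eq_of_approx : \int[mu]_(x in D) g x = c%:E.
Proof.
have M_fin : M \is a fin_num.
  by rewrite ge0_fin_numE // integral_ge0 // => x Dx; rewrite lee_fin W0.
have bounds n : (0 < n)%N -> \int[mu]_(x in D) g x <= c%:E + (`|e n|)%:E * M /\
    c%:E <= \int[mu]_(x in D) g x + (`|e n|)%:E * M.
  move=> n0; rewrite -(intf n0) -(integral_errorD n mg g0).
  rewrite -(integral_errorD n (mf n) (f0 n)); split.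
  - apply: (ge0_le_integral mu mD g0 mg); first exact: emeasurable_funD.
    by move=> x Dx; have [] := fg n0 Dx.
  - apply: (ge0_le_integral mu mD (f0 n) (mf n)); first exact: emeasurable_funD.
    by move=> x Dx; have [] := fg n0 Dx.
have G_fin : \int[mu]_(x in D) g x \is a fin_num.
  rewrite ge0_fin_numE ?integral_ge0 //.
  apply: le_lt_trans (proj1 (bounds 1%N isT)) _.
  by rewrite -(fineK M_fin) -EFinM -EFinD ltry.
rewrite -(fineK G_fin); congr EFin.
apply: (eq_of_dist_le_cvg0 (m := fine M) e0) => n n0.
have [] := bounds n n0; rewrite -(fineK G_fin) -(fineK M_fin) -EFinM -!EFinD !lee_fin.
by move=> h1 h2; rewrite ler_distlC; apply/andP; split; lra.
Qed.

End integral_approximation.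

Section ereal_bounds.
Context (R : realType).

Lemma lee_dist_fin (a b : \bar R) (t : R) : a \is a fin_num ->
  `|a - b| <= t%:E -> b <= a + t%:E /\ a <= b + t%:E.
Proof.
move: a b => [a||] [b||] //= _; rewrite ?leye_eq //.
by rewrite lee_fin ler_distlC => /andP[h1 h2]; rewrite -!EFinD !lee_fin; lra.
Qed.

Lemma lee_mul01_abs (r : R) (x : \bar R) : 0 <= x <= 1 -> r%:E * x <= `|r|%:E.
Proof.
case: x => [x||] //=; rewrite ?leye_eq ?andbF // !lee_fin => /andP[x0 x1].
by rewrite (le_trans (ler_wpM2r x0 (ler_norm r))) // ler_piMr.
Qed.

Lemma normr_indic_le1 (T : Type) (A : set T) (y : T) : (`|\1_A y : R| <= 1)%R.
Proof. by rewrite indicE; case: (y \in A); rewrite ?normr1 ?normr0. Qed.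

Lemma sumI_ge0 (I : countType) (a : I -> \bar R) : (forall i, 0 <= a i) ->
  sumI a = \esum_(i in [set: I]) a i.
Proof.
move=> a0; rewrite /sumI [X in _ - X]esum1 ?sube0; last first.
  by move=> i _; rewrite max_r // oppe_le0.
by apply: eq_esum => i _; rewrite max_l.
Qed.

End ereal_bounds.

Section kernel_iterates.
Context (R : realType) (d : measure_display) (T : measurableType d)
  (P : R.-pker T ~> T) (cem : T).

Lemma Spos_ge0 n (g : T -> \bar R) :
  (forall y, 0 <= g y) -> forall x, 0 <= Spos P cem n g x.
Proof.
move=> g0; elim: n => [|n IHn] x /=; first by case: ifP.
exact: integral_ge0.
Qed.

Lemma Spos_cst0 n x : Spos P cem n (cst 0) x = 0.
Proof.
elim: n x => [|n IHn] x /=; first by case: ifP.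
by under eq_integral do rewrite IHn; rewrite integral0.
Qed.

Lemma Ssg_indic (A : set T) n x :
  Ssg P cem n \1_A x = Spos P cem n (fun y => (\1_A y)%:E) x.
Proof.
rewrite /Ssg; have -> : (fun y => (Num.max (- \1_A y) 0%R)%:E) = cst (0 : \bar R).
  by apply/funext => y; rewrite /= max_r // oppr_le0.
rewrite Spos_cst0 sube0; congr Spos; apply/funext => y.
by rewrite max_l.
Qed.

Hypothesis mcem : measurable [set cem].

Lemma measurable_Dom : measurable (Dom cem).
Proof. exact: measurableC. Qed.

Lemma measurable_Spos n (g : T -> \bar R) : (forall y, 0 <= g y) ->
  measurable_fun [set: T] g -> measurable_fun [set: T] (Spos P cem n g).
Proof.
move=> g0 mg; elim: n => [|n IHn] /=.
  apply: measurable_fun_ifT => //; apply: (@measurable_fun_bool _ _ _ _ true).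
  by rewrite setTI (_ : _ @^-1` _ = [set cem]) //; apply/seteqP; split=> x /eqP.
apply: (measurable_fun_integral_kernel (l := P)) => //.
- by move=> U mU; exact: measurable_kernel.
- exact: Spos_ge0.
Qed.

Lemma Spos_le1 n (g : T -> \bar R) : (forall y, 0 <= g y <= 1) ->
  measurable_fun [set: T] g -> forall x, Spos P cem n g x <= 1.
Proof.
move=> g01 mg; have g0 y : 0 <= g y by case/andP: (g01 y).
elim: n => [|n IHn] x /=.
  by case: ifP => _; [rewrite lee01 | case/andP: (g01 x)].
apply: (@le_trans _ _ (\int[P x]_y cst 1 y)).
  apply: ge0_le_integral => //.
  - by move=> y _; exact: Spos_ge0.
  - exact: measurable_Spos.
by rewrite integral_cst // mul1e (@prob_kernel _ _ _ _ _ P x).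
Qed.

End kernel_iterates.

Lemma negpowE (R : realType) (th : R) n (a : \bar R) : (0 < th)%R ->
  negpow th n a = a * (th ^- n)%:E.
Proof. by move=> th0; rewrite /negpow expf_eq0 gt_eqF // andbF. Qed.

Section j_seq.
Context (R : realType) (d : measure_display) (T : measurableType d)
  (P : R.-pker T ~> T) (cem : T).

Lemma j_seq_ge0 (a : nat -> \bar R) : 0 <= j_seq P cem a.
Proof.
rewrite /j_seq; case: asboolP => // _.
by apply: le_ereal_inf_tmp => _ [l [l0 _] <-]; rewrite lee_fin.
Qed.

Lemma j_seq_le (a : nat -> \bar R) (l : R) : (0 <= l)%R ->
  limn_einf (fun n => (n%:R `^ (- l))%:E * negpow (fine (theta0S P cem)) n (a n)) = 0 ->
  j_seq P cem a <= l%:E.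
Proof.
move=> l0 al0; rewrite /j_seq; case: asboolP => [_|]; last by case; exists l.
by apply: ereal_inf_lbound; exists l.
Qed.

Lemma j_seq_geometric (th0 : R) : (0 < th0)%R -> theta0S P cem = th0%:E ->
  j_seq P cem (fun n => (th0 ^+ n)%:E) = 0.
Proof.
move=> th0_gt0 th0E; apply/eqP; rewrite eq_le j_seq_ge0 andbT.
apply/lee_addgt0Pr => e e0; rewrite add0e; apply: j_seq_le; first exact: ltW.
rewrite -(limn_einf_natpowRN e0) th0E; congr limn_einf; apply/funext => n.
by rewrite negpowE // -!EFinM mulfV ?expf_neq0 ?gt_eqF // mulr1.
Qed.

End j_seq.

Section domain.
Context (R : realType) (d : measure_display) (T : measurableType d) (cem : T).

Lemma probability_Dom (mu : probability T R) : measurable [set cem] ->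
  mu [set cem] = 0 -> mu (Dom cem) = 1.
Proof. by move=> mcem mu0; rewrite probability_setC // mu0 sube0. Qed.

Lemma normW_indic_ge0_le1 (W : T -> R) (A : set T) x : Dom cem x ->
  (forall y, Dom cem y -> 1 <= W y)%R -> 0 <= normW cem W \1_A <= 1.
Proof.
move=> Dx W1; have W0 y : Dom cem y -> (0 < W y)%R by move/W1; exact: lt_le_trans.
apply/andP; split.
  apply: le_trans (ereal_sup_ubound _); last by exists x.
  by rewrite lee_fin divr_ge0 // ltW // W0.
apply: ge_ereal_sup => _ [y Dy <-]; rewrite lee_fin ler_pdivrMr ?W0 // mul1r.
apply: le_trans (W1 _ Dy); exact: normr_indic_le1.
Qed.

End domain.

Section negligible_jS_gt0.
Context (R : realType) (d : measure_display) (T : measurableType d)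
  (P : R.-pker T ~> T) (cem : T) (mcem : measurable [set cem])
  (nu : {measure set T -> \bar R}) (th0 : R) (th0_gt0 : (0 < th0)%R)
  (muS1E : forall n, muS1 P cem nu n = (th0 ^+ n)%:E)
  (th0E : theta0S P cem = th0%:E).

Let jS_term (l : R) n x : \bar R :=
  (n%:R `^ (- l))%:E * negpow (fine (theta0S P cem)) n (S1 P cem n x).

Let jS_weight (l : R) n : R := n%:R `^ (- l) * th0 ^- n.

Let jS_termE l n x : jS_term l n x = (jS_weight l n)%:E * S1 P cem n x.
Proof. by rewrite /jS_term th0E /= negpowE // EFinM -muleA [S1 _ _ _ _ * _]muleC. Qed.

Let jS_weight_ge0 l n : (0 <= jS_weight l n)%R.
Proof. by rewrite mulr_ge0 ?powR_ge0 // invr_ge0 exprn_ge0 // ltW. Qed.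

Let S1_ge0 n x : 0 <= S1 P cem n x.
Proof. exact: Spos_ge0. Qed.

Let measurable_S1 n : measurable_fun (Dom cem) (S1 P cem n).
Proof.
apply: (measurable_funS measurableT) => //.
by apply: measurable_Spos => //; exact: measurable_cst.
Qed.

Let measurable_jS_term l n : measurable_fun (Dom cem) (jS_term l n).
Proof.
rewrite (_ : jS_term l n = fun x => (jS_weight l n)%:E * S1 P cem n x).
  exact: measurable_funeM.
exact/funext/jS_termE.
Qed.

Let jS_term_ge0 l n x : 0 <= jS_term l n x.
Proof. by rewrite jS_termE mule_ge0 ?lee_fin. Qed.

Let integral_jS_term l n :
  \int[nu]_(x in Dom cem) jS_term l n x = (n%:R `^ (- l))%:E.
Proof.
under eq_integral do rewrite jS_termE.
rewrite ge0_integralZl_EFin //; last exact: measurable_Dom.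
rewrite -/(muS1 P cem nu n) muS1E -EFinM /jS_weight -mulrA mulVf ?mulr1 //.
by rewrite expf_neq0 // gt_eqF.
Qed.

(* Fatou: the integral of the liminf is at most liminf_n n^-l = 0. *)
Let liminf_jS_term_ae0 l : (0 < l)%R ->
  ae_eq nu (Dom cem) (fun x => limn_einf (jS_term l ^~ x)) (cst 0).
Proof.
move=> l0; have mD := measurable_Dom mcem.
have liminf_ge0 x : 0 <= limn_einf (jS_term l ^~ x).
  rewrite limn_einf_lim; apply: lime_ge; first exact: is_cvg_einfs.
  by apply: nearW => n; apply: le_ereal_inf_tmp => _ [m _ <-].
apply/(ae_eq_integral_abs nu mD); first exact: measurable_fun_limn_einf.
under eq_integral do rewrite gee0_abs //.
apply/eqP; rewrite eq_le integral_ge0 ?andbT //.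
apply: le_trans (fatou nu mD (measurable_jS_term l) (fun n x _ => jS_term_ge0 l n x)) _.
by under eq_fun do rewrite integral_jS_term; rewrite limn_einf_natpowRN.
Qed.

Lemma negligible_jS_pt_gt0 :
  nu.-negligible [set x | Dom cem x /\ 0 < jS_pt P cem x].
Proof.
have lk_gt0 k : (0 < k.+1%:R^-1 :> R)%R by rewrite invr_gt0.
apply: negligibleS (negligible_bigcup (fun k => liminf_jS_term_ae0 (lk_gt0 k))).
move=> x [Dx /exists_natSinv_lt [k jx]]; exists k => // /= /(_ Dx) lim0.
by move: jx; rewrite ltNge j_seq_le // ltW.
Qed.

End negligible_jS_gt0.

Section qsd_decomposition.
Context (R : realType) (d : measure_display) (T : measurableType d)
  (P : R.-pker T ~> T) (cem : T) (mcem : measurable [set cem])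
  (nu : probability T R) (th0 : R) (th0_gt0 : (0 < th0)%R)
  (muS1E : forall n, muS1 P cem nu n = (th0 ^+ n)%:E)
  (th0E : theta0S P cem = th0%:E) (hqsd : isQSD P cem nu).
Context (W : T -> R) (I : countType) (nuS : I -> probability T R)
  (eta : I -> T -> R) (alpha : nat -> R).
Hypothesis hA : AssumptionA P cem W nuS eta alpha.

Let mD : measurable (Dom cem) := measurable_Dom mcem.

Let jS_pt_nat x : Dom cem x -> exists k : nat, jS_pt P cem x = k%:R%:E.
Proof. by case: hA => _ [hj _]; exact: hj. Qed.

Let measurable_W : measurable_fun (Dom cem) W.
Proof. by case: hA => _ [_ [[]]]. Qed.

Let W_ge1 x : Dom cem x -> (1 <= W x)%R.
Proof. by case: hA => _ [_ [[_ W1] _]]; exact: W1. Qed.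

Let measurable_eta i : measurable_fun (Dom cem) (eta i).
Proof. by case: hA => _ [_ [_ [_ [/(_ i)[]]]]]. Qed.

Let eta_ge0 i x : Dom cem x -> (0 <= eta i x)%R.
Proof. by case: hA => _ [_ [_ [_ [/(_ i)[_ e0 _ _] _]]]]; exact: e0. Qed.

Let alpha_cvg0 : alpha @ \oo --> 0%R.
Proof. by case: hA => _ [_ [_ [_ [_ [_ []]]]]]. Qed.

Let assumptionA_bound (f : T -> R) :
  measurable_fun (Dom cem) f -> inLinf cem W f ->
  forall n x, (0 < n)%N -> Dom cem x ->
  `| ((th0 ^- n) * (n%:R `^ (- fine (jS_pt P cem x))))%:E * Ssg P cem n f x
     - sumI (fun i => (eta i x)%:E * \int[nuS i]_(y in Dom cem) (f y)%:E) |
  <= (alpha n * W x)%:E * normW cem W f.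
Proof.
by case: hA => _ [_ [_ [_ [_ [_ [_ hmain]]]]]]; rewrite th0E in hmain; exact: hmain.
Qed.

Let mixture (A : set T) (x : T) : \bar R :=
  \esum_(i in [set: I]) (eta i x)%:E * nuS i A.

Let measurable_mixture A : measurable_fun (Dom cem) (mixture A).
Proof.
apply: emeasurable_fun_esum => // [i|i x Dx].
  by apply: emeasurable_funM => //; apply/measurable_EFinP.
by rewrite mule_ge0 ?lee_fin ?eta_ge0.
Qed.

Let mixture_ge0 A x : Dom cem x -> 0 <= mixture A x.
Proof. by move=> Dx; apply: esum_ge0 => i _; rewrite mule_ge0 ?lee_fin ?eta_ge0. Qed.

Let integral_mixture A :
  \int[nu]_(x in Dom cem) mixture A x =
  \esum_(i in [set: I]) (\int[nu]_(x in Dom cem) (eta i x)%:E) * nuS i A.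
Proof.
rewrite ge0_integral_esum //.
- apply: eq_esum => i _; rewrite ge0_integralZr //; first exact/measurable_EFinP.
  by move=> x Dx; rewrite lee_fin eta_ge0.
- by move=> i; apply: emeasurable_funM => //; exact/measurable_EFinP.
- by move=> i x Dx; rewrite mule_ge0 ?lee_fin ?eta_ge0.
Qed.

Let S_indic (A : set T) n := Spos P cem n (fun y => (\1_A y)%:E).

Let S_indic_ge0 A n x : 0 <= S_indic A n x.
Proof. by apply: Spos_ge0 => y; rewrite lee_fin. Qed.

Let measurable_S_indic A n : measurable A ->
  measurable_fun [set: T] (S_indic A n).
Proof.
by move=> mA; apply: measurable_Spos => //; exact/measurable_EFinP/measurable_indic.
Qed.

Let S_indic_fin A n x : measurable A -> S_indic A n x \is a fin_num.
Proof.
move=> mA; rewrite ge0_fin_numE //; apply: le_lt_trans (ltry 1).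
apply: (Spos_le1 P mcem) => [y|]; last exact/measurable_EFinP/measurable_indic.
by rewrite !lee_fin indicE; case: (y \in A) => /=; rewrite ?lexx ?ler01.
Qed.

Lemma S_indic_approx (A : set T) n x : measurable A -> A `<=` Dom cem ->
  (0 < n)%N -> Dom cem x -> jS_pt P cem x = 0 ->
  mixture A x <= (th0 ^- n)%:E * S_indic A n x + (`|alpha n| * W x)%:E /\
  (th0 ^- n)%:E * S_indic A n x <= mixture A x + (`|alpha n| * W x)%:E.
Proof.
move=> mA AD n0 Dx jx0.
have indic_mf : measurable_fun (Dom cem) (\1_A : T -> R) by exact: measurable_indic.
have indic_Linf : inLinf cem W \1_A.
  by exists 1%R => y Dy; rewrite mul1r (le_trans _ (W_ge1 Dy)) ?normr_indic_le1.
have := assumptionA_bound indic_mf indic_Linf n0 Dx.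
rewrite jx0 /= oppr0 powRr0 mulr1 Ssg_indic -/(S_indic A n x).
under eq_fun do rewrite integral_indic // setIidl //.
rewrite sumI_ge0 => [bound|i]; last by rewrite mule_ge0 ?lee_fin ?eta_ge0.
apply: lee_dist_fin; first by rewrite fin_numM ?S_indic_fin.
apply: le_trans bound _.
have -> : (`|alpha n| * W x = `|alpha n * W x|)%R.
  by rewrite normrM [`|W x|%R]ger0_norm // (le_trans ler01 (W_ge1 Dx)).
by rewrite lee_mul01_abs // (normW_indic_ge0_le1 _ Dx W_ge1).
Qed.

Let integral_S_indic A n : measurable A -> A `<=` Dom cem ->
  \int[nu]_(x in Dom cem) S_indic A n x = nu A * (th0 ^+ n)%:E.
Proof. by move=> mA AD; rewrite -muS1E; case: hqsd => _ /(_ n A mA AD)[]. Qed.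

Hypothesis nuW_fin : \int[nu]_(x in Dom cem) (W x)%:E < +oo.

Lemma qsd_mixture (A : set T) : measurable A -> A `<=` Dom cem ->
  nu A = \esum_(i in [set: I]) (\int[nu]_(x in Dom cem) (eta i x)%:E) * nuS i A.
Proof.
move=> mA AD.
have [N [mN N0 jN]] := negligible_jS_pt_gt0 mcem th0_gt0 muS1E th0E.
have mD' : measurable (Dom cem `\` N) by exact: measurableD.
have D'D : Dom cem `\` N `<=` Dom cem by move=> x [].
have jS0 x : (Dom cem `\` N) x -> jS_pt P cem x = 0.
  move=> [Dx Nx]; have [[|k] jk] := jS_pt_nat Dx; first by rewrite jk.
  by exfalso; apply/Nx/jN; split; rewrite // jk lte_fin ltr0Sn.
have mW : measurable_fun (Dom cem) (fun x => (W x)%:E) by exact/measurable_EFinP.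
have W0 x : Dom cem x -> (0 <= W x)%R by move/W_ge1; exact: le_trans.
rewrite -integral_mixture (ge0_negligible_integral (D := Dom cem) (N := N)) //;
  last exact: mixture_ge0.
rewrite -[nu A]fineK ?fin_num_measure //; apply/esym.
apply: (integral_eq_of_approx (f := fun n x => (th0 ^- n)%:E * S_indic A n x)
  (W := W) mD' alpha_cvg0) => //.
- move=> n; apply: measurable_funeM.
  exact: measurable_funS (measurable_S_indic n mA).
- exact: measurable_funS (measurable_mixture A).
- exact: measurable_funS mW.
- by move=> n x _; rewrite mule_ge0 // lee_fin invr_ge0 exprn_ge0 // ltW.
- by move=> x [Dx _]; exact: mixture_ge0.
- by move=> x [Dx _]; exact: W0.
- by rewrite -ge0_negligible_integral // => x Dx; rewrite lee_fin W0.
- move=> n _; rewrite fineK ?fin_num_measure // ge0_integralZl_EFin //.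
  + rewrite -ge0_negligible_integral // ?integral_S_indic //.
    * by rewrite muleCA -EFinM mulVf ?mule1 // expf_neq0 // gt_eqF.
    * exact: measurable_funS (measurable_S_indic n mA).
  + exact: measurable_funS (measurable_S_indic n mA).
  + by rewrite invr_ge0 exprn_ge0 // ltW.
- by move=> n x n0 [Dx Nx]; apply: S_indic_approx => //; exact: jS0.
Qed.

End qsd_decomposition.

Unset Implicit Arguments.
Set Strict Implicit.

Theorem proposition2p3 (R : realType) (d : measure_display) (T : measurableType d)
  (P : R.-pker T ~> T) (cem : T)
  (hcem : measurable [set cem]) (habs : P cem [set cem] = 1)
  (nu : probability T R) (th0 : R)
  (hqsd : isQSD P cem nu) (hpar : exp_param P cem nu th0)
  (hth0 : theta0S P cem = th0%:E) :
  (jS_mu P cem nu = 0 /\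
   nu.-negligible [set x | Dom cem x /\ 0 < jS_pt P cem x]) /\
  (forall (W : T -> R) (I : countType) (nuS : I -> probability T R)
          (eta : I -> T -> R) (alpha : nat -> R),
     AssumptionA P cem W nuS eta alpha ->
     \int[nu]_(x in Dom cem) (W x)%:E < +oo ->
     \int[nu]_(x in Dom cem) etaS eta x = 1 /\
     (forall A : set T, measurable A -> A `<=` Dom cem ->
        nu A = \esum_(i in [set: I])
                 (\int[nu]_(x in Dom cem) (eta i x)%:E) * nuS i A)).
Proof.
have [/andP[th0_gt0 _] muS1E] := hpar.
split.
  split; last exact: negligible_jS_pt_gt0 th0_gt0 muS1E hth0.
  by rewrite /jS_mu (funext muS1E); exact: j_seq_geometric.
move=> W I nuS eta alpha hA nuW_fin.
have decomp := qsd_mixture hcem th0_gt0 muS1E hth0 hqsd hA nuW_fin.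
split=> //; have mD := measurable_Dom hcem.
have [_ [_ [_ [nuS_cem [eta_prop _]]]]] := hA.
rewrite /etaS ge0_integral_esum //; first last.
- by move=> i x Dx; case: (eta_prop i) => _ eta0 _ _; rewrite lee_fin eta0.
- by move=> i; case: (eta_prop i) => meta _ _ _; exact/measurable_EFinP.
rewrite -(probability_Dom hcem (proj1 hqsd)) (decomp _ mD (@subset_refl _ _)).
by apply: eq_esum => i _; rewrite probability_Dom ?mule1 //; case: (nuS_cem i).
Qed.
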